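(* Under the standing assumptions, let $u^0\in\operatorname{dom}(J)$ with $|u^0|_H=1$, and let sequences $(u^k)$, $(u^{k+1/2})$, $(\zeta^k)$ be generated by the inverse power method $$\zeta^k\in\partial H(u^k),\qquad u^{k+1/2}\in\partial J^*(\zeta^k),\qquad u^{k+1}=\frac{u^{k+1/2}}{|u^{k+1/2}|_H},$$ where it is assumed that each step is well defined and $u^{k+1/2}\ne0$ for all $k$. Then $R_*(\zeta^k)\le R_*(\zeta^{k+1})$ for all $k\in\mathbb N$. (No homogeneity of $J$ is required.)
   Context: Standing assumptions: $X$ is a real reflexive Banach space with dual $X^*$ and duality pairing $\langle\cdot,\cdot\rangle$; $\Gamma_0(X)$ is the class of proper, lower semi-continuous, convex functionals $X\to\mathbb{R}\cup\{+\infty\}$. Fix $1<p<\infty$ and $q=\frac{p}{p-1}$. Let $J\in\Gamma_0(X)$, and let $H\in\Gamma_0(X)$ be absolutely $p$-homogeneous ($H(tu)=|t|^pH(u)$) such that $|u|_H:=(pH(u))^{1/p}$ is a norm on $X$, so $H(u)=\frac1p|u|_H^p$. The dual norm is $|\zeta|_{H^*}=\sup_{u\ne0}\langle\zeta,u\rangle/|u|_H$, and $H^*(\zeta)=\frac1q|\zeta|_{H^*}^q$. The Fenchel conjugate is $J^*(\zeta)=\sup_{u\in X}\langle\zeta,u\rangle-J(u)$ and the subdifferential is $\partial J(u)=\{\zeta\in X^*:\ J(u)+\langle\zeta,v-u\rangle\le J(v)\ \forall v\in X\}$. Growth assumption: there is $c>0$ with $H(u)\le cJ(u)$ for all $u\in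 X$. The dual Rayleigh quotient is $R_*(\zeta)=J^*(\zeta)/H^*(\zeta)$ for $\zeta\ne0$. $\operatorname{dom}(J)=\{u:J(u)<\infty\}$. *)

From HB Require Import structures.
From mathcomp Require Import all_boot all_order all_algebra.
From mathcomp Require Import all_classical all_reals all_analysis.
Set Implicit Arguments. Unset Strict Implicit. Unset Printing Implicit Defensive.
Import Order.TTheory GRing.Theory Num.Theory.
Import numFieldNormedType.Exports.
Local Open Scope classical_set_scope.
Local Open Scope ring_scope.

Section Defs.
Context {R : realType} {X : completeNormedModType R}.

Definition dual_elt (f : X -> R) : Prop :=
  (forall (a : R) (x y : X), f (a *: x + y) = a * f x + f y) /\ continuous f.

Definition dual_norm (f : X -> R) : R :=
  sup [set `|f x| | x in [set x : X | `|x| <= 1]].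

Definition reflexive_space : Prop :=
  forall phi : (X -> R) -> R,
    (forall (a : R) f g, dual_elt f -> dual_elt g ->
       phi (fun x => a * f x + g x) = a * phi f + phi g) ->
    (exists C : R, forall f, dual_elt f -> `|phi f| <= C * dual_norm f) ->
    exists x : X, forall f, dual_elt f -> phi f = f x.

Local Open Scope ereal_scope.

Definition proper_fun (F : X -> \bar R) : Prop :=
  (exists u, F u < +oo) /\ (forall u, -oo < F u).

Definition convex_fun (F : X -> \bar R) : Prop :=
  forall (u v : X) (t : R), (0 < t < 1)%R ->
    F (t *: u + (1 - t) *: v)%R <= t%:E * F u + (1 - t)%:E * F v.

Definition Gamma0 (F : X -> \bar R) : Prop :=
  proper_fun F /\ lower_semicontinuous F /\ convex_fun F.

Definition fconj (F : X -> \bar R) (zeta : X -> R) : \bar R :=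
  ereal_sup [set (zeta u)%:E - F u | u in [set: X]].

Definition subdiff (F : X -> \bar R) (u : X) (zeta : X -> R) : Prop :=
  dual_elt zeta /\ forall v : X, F u + (zeta (v - u)%R)%:E <= F v.

(* w \in \partial G(zeta) for G : X^* -> \bar R, with X^** identified with X *)
Definition subdiff_dual (G : (X -> R) -> \bar R) (zeta : X -> R) (w : X) : Prop :=
  forall eta : X -> R, dual_elt eta -> G zeta + (eta w - zeta w)%R%:E <= G eta.

Definition Hnorm (H : X -> \bar R) (p : R) (u : X) : R :=
  powR (p * fine (H u))%R p^-1.

Definition Rstar (J H : X -> \bar R) (zeta : X -> R) : \bar R :=
  fconj J zeta / fconj H zeta.

End Defs.

From HB Require Import structures.
From mathcomp Require Import all_boot all_order all_algebra.
From mathcomp Require Import all_classical all_reals all_analysis.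
From mathcomp Require Import ring lra.
Import Order.TTheory GRing.Theory Num.Theory.
Import numFieldNormedType.Exports.
Local Open Scope classical_set_scope.
Local Open Scope ring_scope.

(** On the H-unit sphere a subgradient [zeta] of H at [u] satisfies
   [zeta u = 1] (differentiate [t |-> t^p H(u)] at [t = 1]), hence
   [H^*(zeta) = 1 - 1/p] and R_* is [J^*] up to a constant factor.
   Since [u^{k+1/2} in dJ^*(zeta^k)],
   [J^*(zeta^{k+1}) >= J^*(zeta^k) + (zeta^{k+1} - zeta^k)(u^{k+1/2})], and the
   increment is nonnegative: [u^{k+1/2}] is a positive multiple of [u^{k+1}],
   where [zeta^{k+1}] equals 1 while [zeta^k] is at most 1. *)

Lemma powR_tangent_le {R : realType} {p l : R} : 1 < p -> 0 < l ->
  l `^ p - 1 <= p * (l - 1) * l `^ (p - 1).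
Proof.
move=> p1 l0; have p0 : 0 < p by lra.
have q0 : 0 < p / (p - 1) by rewrite divr_gt0 ?subr_gt0.
have pq : (p / (p - 1))^-1 + p^-1 = 1 by field; lra.
have := conjugate_powR (powR_ge0 l (p - 1)) ler01 q0 p0 pq.
rewrite mulr1 powR1 -powRrM mulrCA divff ?mulr1 ?subr_eq0 ?gt_eqF //.
rewrite -(mulr_powRB1 (ltW l0) p0).
set L := l `^ (p - 1) => Young.
have {}Young : p * L <= (p - 1) * (l * L) + 1.
  have -> : (p - 1) * (l * L) + 1 = p * (l * L / (p / (p - 1)) + 1 / p).
    by field; lra.
  by rewrite ler_pM2l.
lra.
Qed.

Lemma powR_sandwich_eq1 {R : realType} (r a : R) : 0 < r ->
  (forall l, 0 < l -> (l - 1) * a <= (l - 1) * l `^ r) -> a = 1.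
Proof.
move=> r0 sandwich; set s := r^-1.
have s0 : 0 < s by rewrite invr_gt0.
have one_s : (1 : R) `^ s = 1 by rewrite powR1.
have powRsK b : 0 <= b -> (b `^ s) `^ r = b.
  by move=> b0; rewrite -powRrM mulVf ?gt_eqF // powRr1.
have above l : 1 < l -> a <= l `^ r.
  by move=> l1; have := sandwich l (lt_trans ltr01 l1); rewrite ler_pM2l ?subr_gt0.
have below l : 0 < l -> l < 1 -> l `^ r <= a.
  by move=> l0 l1; have := sandwich l l0; rewrite ler_nM2l ?subr_lt0.
apply/eqP; rewrite eq_le; apply/andP; split; rewrite leNgt; apply/negP => a1.
- set b := (1 + a) / 2.
  have b1 : 1 < b by rewrite ltr_pdivlMr //; lra.
  have ba : b < a by rewrite ltr_pdivrMr //; lra.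
  have : 1 < b `^ s by rewrite -[X in X < _]one_s (gt0_ltr_powR s0) // nnegrE; lra.
  by move=> /above; rewrite powRsK; lra.
- have [a0|a0] := lerP a 0.
    have h0 : (0 : R) < 2^-1 by rewrite invr_gt0.
    have h1 : (2 : R)^-1 < 1 by rewrite invf_lt1 //; lra.
    by have := below _ h0 h1; have := powR_gt0 r h0; lra.
  set b := (1 + a) / 2.
  have b1 : b < 1 by rewrite ltr_pdivrMr //; lra.
  have ab : a < b by rewrite ltr_pdivlMr //; lra.
  have b0 : 0 < b `^ s by apply: powR_gt0; lra.
  have : b `^ s < 1 by rewrite -[X in _ < X]one_s (gt0_ltr_powR s0) // nnegrE; lra.
  by move=> /(below _ b0); rewrite powRsK; lra.
Qed.

Section DualElt.
Context {R : realType} {X : completeNormedModType R} {z : X -> R} (dz : dual_elt z).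

Lemma dual_elt0 : z 0 = 0.
Proof. by have := dz.1 1 0 0; rewrite scaler0 addr0 mul1r; lra. Qed.

Lemma dual_eltZ a x : z (a *: x) = a * z x.
Proof. by have := dz.1 a x 0; rewrite addr0 dual_elt0 addr0. Qed.

Lemma dual_eltB x y : z (x - y) = z x - z y.
Proof. by have := dz.1 (-1) y x; rewrite scaleN1r mulN1r addrC => ->; rewrite addrC. Qed.

End DualElt.

Lemma subdiff_dual_le {R : realType} {X : completeNormedModType R}
    {G : (X -> R) -> \bar R} {z eta : X -> R} {w : X} :
  subdiff_dual G z w -> dual_elt eta -> z w <= eta w -> (G z <= G eta)%E.
Proof.
move=> Gzw deta zw; apply: le_trans (Gzw eta deta).
by apply: lee_paddr => //; rewrite lee_fin subr_ge0.
Qed.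

Section HomogeneousH.
Context {R : realType} {X : completeNormedModType R} {p : R} {H : X -> \bar R}.
Hypotheses (p1 : 1 < p) (Hcvx : convex_fun H)
  (Hhom : forall (t : R) (v : X), H (t *: v) = ((`|t| `^ p)%:E * H v)%E)
  (Hfin : forall v : X, H v \is a fin_num).

Let p0 : 0 < p. Proof. exact: lt_trans ltr01 p1. Qed.

(* H(0) <= (H w + H(-w)) / 2 = H w, and H(0) = 0 *)
Lemma fine_H_ge0 w : 0 <= fine (H w).
Proof.
have half : 0 < (2^-1 : R) < 1 by rewrite invr_gt0 invf_lt1 //; lra.
have := Hcvx w (- w) (2^-1) half.
have -> : (1 - 2^-1 : R) = 2^-1 by field.
rewrite scalerN subrr -(scale0r w).
rewrite -[- w]scaleN1r !Hhom normrN normr1 powR1 mul1e normr0 powR0 ?gt_eqF // mul0e.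
by rewrite -(fineK (Hfin w)) -!EFinM -EFinD lee_fin; lra.
Qed.

Lemma H_of_Hnorm1 {w} : Hnorm H p w = 1 -> H w = (p^-1)%:E.
Proof.
rewrite /Hnorm => /(congr1 (fun x : R => x `^ p)).
rewrite /= -powRrM mulVf ?gt_eqF // powRr1 ?mulr_ge0 ?fine_H_ge0 ?(ltW p0) // powR1.
by move=> pHw; rewrite -(fineK (Hfin w)) -[p^-1]mulr1 -pHw mulKf ?gt_eqF.
Qed.

Section Subgradient.
Context {u : X} {z : X -> R}.
Hypotheses (dHu : subdiff H u z) (u1 : Hnorm H p u = 1).

(* testing the subgradient inequality along the ray [l *: u] pins [z u]
   between [l `^ (p - 1)] for [l < 1] and for [l > 1] *)
Lemma subdiff_H_base : z u = 1.
Proof.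
have [dz sub] := dHu.
apply: (@powR_sandwich_eq1 _ (p - 1)); first by rewrite subr_gt0.
move=> l l0; have := sub (l *: u).
rewrite (dual_eltB dz) (dual_eltZ dz) Hhom (H_of_Hnorm1 u1) (ger0_norm (ltW l0)).
rewrite -EFinD -EFinM lee_fin -(ler_pM2l p0) mulrDr mulrCA !mulfV ?gt_eqF //.
rewrite mulr1 => ray; rewrite -(ler_pM2l p0).
have := powR_tangent_le p1 l0; lra.
Qed.

Lemma subdiff_H_le1 w : Hnorm H p w = 1 -> z w <= 1.
Proof.
move=> w1; have := dHu.2 w.
rewrite (dual_eltB dHu.1) subdiff_H_base (H_of_Hnorm1 u1) (H_of_Hnorm1 w1).
by rewrite -EFinD lee_fin; lra.
Qed.

Lemma fconj_H_subdiff : fconj H z = (1 - p^-1)%:E.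
Proof.
apply/eqP; rewrite eq_le; apply/andP; split.
  apply/ereal_supP => _ [w _ <-]; have := dHu.2 w.
  rewrite (dual_eltB dHu.1) subdiff_H_base (H_of_Hnorm1 u1).
  by rewrite -(fineK (Hfin w)) -!EFinD !lee_fin; lra.
by apply: ereal_sup_ubound; exists u; rewrite // subdiff_H_base (H_of_Hnorm1 u1) -EFinD.
Qed.

End Subgradient.

End HomogeneousH.

Section HnormNormalize.
Context {R : realType} {X : completeNormedModType R} {p : R} {H : X -> \bar R}.
Hypotheses (Hnorm_def : forall v : X, Hnorm H p v = 0 -> v = 0)
  (Hnorm_scale : forall (a : R) (w : X), Hnorm H p (a *: w) = `|a| * Hnorm H p w).

Lemma Hnorm_gt0 {v} : v <> 0 -> 0 < Hnorm H p v.
Proof.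
by move=> v0; rewrite lt0r powR_ge0 andbT; apply: contra_notN v0 => /eqP/Hnorm_def.
Qed.

Lemma Hnorm_normalize {v} : v <> 0 -> Hnorm H p ((Hnorm H p v)^-1 *: v) = 1.
Proof.
move=> /Hnorm_gt0 v0.
by rewrite Hnorm_scale ger0_norm ?invr_ge0 ?ltW // mulVf ?gt_eqF.
Qed.

End HnormNormalize.

Theorem lemma3p1 (R : realType) (X : completeNormedModType R)
  (p : R) (J H : X -> \bar R) (c : R)
  (u uh : nat -> X) (zeta : nat -> X -> R) :
  reflexive_space (X := X) ->
  1 < p ->
  Gamma0 J -> Gamma0 H ->
  (* H absolutely p-homogeneous *)
  (forall (t : R) (v : X), H (t *: v) = ((`|t| `^ p)%:E * H v)%E) ->
  (* |.|_H := (p H(.))^(1/p) is a (finite) norm on X *)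
  (forall v : X, H v \is a fin_num) ->
  (forall v : X, Hnorm H p v = 0 -> v = 0) ->
  (forall (a : R) (v : X), Hnorm H p (a *: v) = `|a| * Hnorm H p v) ->
  (forall v w : X, Hnorm H p (v + w) <= Hnorm H p v + Hnorm H p w) ->
  (* growth assumption *)
  0 < c -> (forall v : X, (H v <= c%:E * J v)%E) ->
  (* initial point *)
  (J (u 0%N) < +oo)%E -> Hnorm H p (u 0%N) = 1 ->
  (* inverse power method iterates *)
  (forall k, subdiff H (u k) (zeta k)) ->
  (forall k, subdiff_dual (fconj J) (zeta k) (uh k)) ->
  (forall k, uh k <> 0) ->
  (forall k, u k.+1 = (Hnorm H p (uh k))^-1 *: uh k) ->
  forall k : nat, (Rstar J H (zeta k) <= Rstar J H (zeta k.+1))%E.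
Proof.
move=> _ p1 _ [_ [_ Hcvx]] Hhom Hfin Hdef Hscale _ _ _ _ u01 dH dJ uh0 uS k.
have u1 i : Hnorm H p (u i) = 1.
  by case: i => [|i] //; rewrite uS (Hnorm_normalize Hdef Hscale).
have fconjH i := fconj_H_subdiff p1 Hcvx Hhom Hfin (dH i) (u1 i).
rewrite /Rstar !fconjH.
have q0 : 0 < 1 - p^-1 by rewrite subr_gt0 invf_lt1 // (lt_trans ltr01 p1).
apply: lee_wpmul2r; first by rewrite inver gt_eqF // lee_fin invr_ge0 ltW.
apply: (subdiff_dual_le (dJ k) (dH k.+1).1).
have t0 := Hnorm_gt0 Hdef (uh0 k).
have -> : uh k = Hnorm H p (uh k) *: u k.+1.
  by rewrite uS scalerA mulfV ?gt_eqF ?scale1r.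
rewrite (dual_eltZ (dH k).1) (dual_eltZ (dH k.+1).1).
rewrite (subdiff_H_base p1 Hcvx Hhom Hfin (dH k.+1) (u1 k.+1)) mulr1 ger_pMr //.
exact: (subdiff_H_le1 p1 Hcvx Hhom Hfin (dH k) (u1 k) _ (u1 k.+1)).
Qed.
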